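(* Let $G$, $H$, the supervisors with $\Sigma_{o,i},\Sigma_{c,i},N_{o,i}$, a controllable event $\sigma\in\Sigma_c$, $N=\max\{N_{o,i}:i\in I^c(\sigma)\}$, and the verifiers $V^k_\sigma$ with reachable state sets $X^k_\sigma$ be as in the context. Then for every $k\in\{0,1,\dots,N-1\}$ the following are equivalent: (a) for every $s\in\mathcal{L}(H)$ with $|s|=k$, if $s\sigma\in\mathcal{L}(G)\setminus\mathcal{L}(H)$ then for every $(s_i)_{i\in I^c(\sigma)}\in\mathcal{T}^{\sigma}_{conf}(s)$ there exists $i\in I^c(\sigma)$ with $s_i\sigma\notin\mathcal{L}(H^{aug}_{N_{o,i}})$; (b) there is no state $(q,(q_i)_{i\in I^c(\sigma)},k)\in X^k_\sigma$ with $\sigma\in\Gamma(q)\setminus\Gamma_H(q)$ and $\sigma\in\Gamma^{aug}_{H,N_{o,i}}(q_i)$ for all $i\in I^c(\sigma)$.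
   Context: $G=(Q,\Sigma,\delta,\Gamma,q_0,Q_m)$ is a deterministic finite automaton (transition function extended to strings; $\Gamma(q)$ = set of events defined at $q$; $\mathcal{L}(G)$ its generated language). $H=(Q_H,\Sigma,\delta_H,\Gamma_H,q_0,Q_{m,H})$ is a sub-automaton of $G$ (obtained by deleting states of $G$ and their attached transitions). For a string $s$, $|s|$ is its length, $s_{-m}$ is its prefix of length $\max\{0,|s|-m\}$, $\Sigma^{\le M}$ is the set of strings of length at most $M$. Supervisors $I=\{1,\dots,n\}$: supervisor $i$ has observable events $\Sigma_{o,i}$, $\Sigma_{uo,i}=\Sigma\setminus\Sigma_{o,i}$, controllable events $\Sigma_{c,i}$, delay bound $N_{o,i}\in\mathbb{N}$; $\Sigma_c=\bigcup_i\Sigma_{c,i}$, $I^c(\sigma)=\{i:\sigma\in\Sigma_{c,i}\}$. $P_i$ is natural projection onto $\Sigma_{o,i}^*$; $\Theta_i^{N_{o,i}}(s)=\{P_i(s_{-m}):0\le m\le N_{o,i}\}$. For $s\in\mathcal{L}(H)$, $\mathcal{T}^\sigma_{conf}(s)$ is the set of tuples $(s_i)_{i\in I^c(\sigma)}$ with $P_i(s_i)\in\Theta_i^{N_{o,i}}(s)$ for all $i\in I^c(\sigma)$. Augmented automaton $H^{aug}_N$: states $Q_H\cup\{q_{dis}\}$, initial state $q_0$; for $q\in Q_H$, $e\in\Sigma$: $\delta^{aug}(q,e)=\delta_H(q,e)$ if $e\in\Gamma_H(q)$, $=q_{dis}$ if $e\notin\Gamma_H(q)$ and $e\in\Gamma_H(\delta_H(q,s'))$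 for some $s'\in\Sigma^{\le N}$ with $\delta_H(q,s')$ defined, undefined otherwise; $q_{dis}$ has no outgoing transitions; $\Gamma^{aug}_{H,N}(q)$ is the set of events defined at $q$ in $H^{aug}_N$. Verifier $V^k_\sigma$ ($0\le k\le N-1$): states are tuples $(q,(q_i)_{i\in I^c(\sigma)},d)$ with $q,q_i\in Q_H$, $d\in[0,k]$; initial state $(q_0,(q_0)_{i},0)$. At a state $(q,(q_i)_i,d)$ and for $e\in\Sigma$, each $i\in I^c(\sigma)$ falls in one case: C1: $k-d>N_{o,i}$, $e\in\Sigma_{o,i}$; C2: $k-d>N_{o,i}$, $e\in\Sigma_{uo,i}$; C3: $k-d\le N_{o,i}$, $\sigma\notin\Gamma^{aug}_{H,N_{o,i}}(q_i)$, $e\in\Sigma_{o,i}$; C4: $k-d\le N_{o,i}$, $\sigma\notin\Gamma^{aug}_{H,N_{o,i}}(q_i)$, $e\in\Sigma_{uo,i}$; C5: $k-d\le N_{o,i}$, $\sigma\in\Gamma^{aug}_{H,N_{o,i}}(q_i)$. Type-1 transition: if $d+1\le k$, $\delta_H(q,e)$ is defined, and $\delta_H(q_i,e)$ is defined for every $i$ in case C1 or C3, there is a transition to $(\delta_H(q,e),(q_i')_i,d+1)$ where $q_i'=\delta_H(q_i,e)$ for $i$ in C1 or C3 and $q_i'=q_i$ for $i$ in C2, C4 or C5. Type-2 transition: for each $i$ in case C2 or C4 with $\delta_H(q_i,e)$ defined, there is a transition to the state obtained by replacing $q_i$ by $\delta_H(q_i,e)$ (all other components, including $q$ and $d$, unchanged).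 $X^k_\sigma$ is the set of states reachable from the initial state. *)

From mathcomp Require Import all_boot.
Set Implicit Arguments. Unset Strict Implicit. Unset Printing Implicit Defensive.

Fixpoint run (S Sigma : Type) (t : S -> Sigma -> option S) (x : S) (s : seq Sigma)
  : option S :=
  match s with
  | [::] => Some x
  | e :: s' => match t x e with Some y => run t y s' | None => None end
  end.

Section Automata.
Variables (Q Sigma : finType).

Definition sub_delta (delta : Q -> Sigma -> option Q) (QH : {set Q})
  (q : Q) (e : Sigma) : option Q :=
  if q \in QH then
    match delta q e with
    | Some q' => if q' \in QH then Some q' else None
    | None => None
    end
  else None.

Definition enabled (t : Q -> Sigma -> option Q) (q : Q) (e : Sigma) : bool :=
  isSome (t q e).

Definition enabled_within (t : Q -> Sigma -> option Q) (N : nat) (q : Q)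
  (e : Sigma) : bool :=
  [exists m : 'I_N.+1, exists w : m.-tuple Sigma,
     match run t q w with Some q' => enabled t q' e | None => false end].

(* Augmented automaton H^aug_N: states are Some q (q in Q_H) and None = q_dis. *)
Definition aug_delta (dH : Q -> Sigma -> option Q) (N : nat)
  (x : option Q) (e : Sigma) : option (option Q) :=
  match x with
  | None => None
  | Some q =>
      match dH q e with
      | Some q' => Some (Some q')
      | None => if enabled_within dH N q e then Some None else None
      end
  end.

Definition aug_Gamma (dH : Q -> Sigma -> option Q) (N : nat) (q : Q) (e : Sigma)
  : bool := isSome (aug_delta dH N (Some q) e).

Definition proj (A : {set Sigma}) (s : seq Sigma) : seq Sigma :=
  [seq e <- s | e \in A].

Definition in_Theta (A : {set Sigma}) (Nb : nat) (s u : seq Sigma) : Prop :=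
  exists m, m <= Nb /\ u = proj A (take (size s - m) s).

Section Verifier.
Variables (dH : Q -> Sigma -> option Q) (q0 : Q) (n : nat)
  (So Sc : 'I_n -> {set Sigma}) (No : 'I_n -> nat) (sigma : Sigma) (k : nat).

Definition moves_obs (qs : 'I_n -> Q) (d : nat) (i : 'I_n) (e : Sigma) : bool :=
  [&& sigma \in Sc i, e \in So i &
      (No i < k - d) || ~~ aug_Gamma dH (No i) (qs i) sigma].

Definition moves_unobs (qs : 'I_n -> Q) (d : nat) (i : 'I_n) (e : Sigma) : bool :=
  [&& sigma \in Sc i, e \notin So i &
      (No i < k - d) || ~~ aug_Gamma dH (No i) (qs i) sigma].

(* Reachable states X^k_sigma of V^k_sigma. The family (q_i)_{i in I^c(sigma)}
   is encoded as a function 'I_n -> Q; components outside I^c(sigma) stay q0. *)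
Inductive vreach : Q -> ('I_n -> Q) -> nat -> Prop :=
| vr_init : vreach q0 (fun _ => q0) 0
| vr_type1 q qs d e q' qs' :
    vreach q qs d -> d.+1 <= k -> dH q e = Some q' ->
    (forall i, if moves_obs qs d i e then dH (qs i) e = Some (qs' i)
               else qs' i = qs i) ->
    vreach q' qs' d.+1
| vr_type2 q qs d e i r :
    vreach q qs d -> moves_unobs qs d i e -> dH (qs i) e = Some r ->
    vreach q (fun j => if j == i then r else qs j) d.
End Verifier.
End Automata.

(* A run of [V^k_sigma] to level [d] can be replayed by a string [s] of length [d]
   and strings [s_i] leading to the [q_i], with [P_i(s_i) = P_i(s)] until [i] enters
   case C5 and [P_i(s_i) = P_i(s_{-m})], [m <= N_{o,i}], afterwards; so a bad
   state at level [k] gives a counterexample to (a).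
   Conversely, a counterexample [s], [(s_i)] to (a) is replayed by [V^k_sigma] level
   by level: each component not in case C5 first consumes, by type-2 moves, the
   unobservable events of [s_i] up to its next observable one, which then matches
   the type-1 move on the next event of [s], since [P_i(s_i)] is the prefix
   [P_i(s_{-m})] of [P_i(s)]; when [s_i] is used up at a level [>= k - m], the
   component is in case C5. *)

From mathcomp Require Import all_boot zify.
Set Implicit Arguments. Unset Strict Implicit. Unset Printing Implicit Defensive.

Lemma run_cat (S T : Type) (t : S -> T -> option S) x a b :
  run t x (a ++ b) = if run t x a is Some y then run t y b else None.
Proof. by elim: a x => //= e a IH x; case: (t x e). Qed.

Lemma run_rcons (S T : Type) (t : S -> T -> option S) x a e :
  run t x (rcons a e) = if run t x a is Some y then t y e else None.
Proof. by rewrite -cats1 run_cat; case: run => //= y; case: (t y e). Qed.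

Lemma run_prefix (S T : Type) (t : S -> T -> option S) x a b :
  isSome (run t x (a ++ b)) -> isSome (run t x a).
Proof. by rewrite run_cat; case: run. Qed.

Lemma drop_take_nth (T : Type) (x0 : T) (s : seq T) d j :
  d < j -> j <= size s -> drop d (take j s) = nth x0 s d :: drop d.+1 (take j s).
Proof. by move=> dj js; rewrite (drop_nth x0) ?nth_take // size_take_min; lia. Qed.

Lemma drop_take_oversize (T : Type) (s : seq T) d j : j <= d -> drop d (take j s) = [::].
Proof. by move=> jd; rewrite drop_oversize // size_take_min; lia. Qed.

Lemma run_sub_delta (Q Sigma : finType) (delta : Q -> Sigma -> option Q) QH x w y :
  run (sub_delta delta QH) x w = Some y -> run delta x w = Some y.
Proof.
elim: w x => //= e w IH x; rewrite /sub_delta.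
by case: (x \in QH) => //; case: (delta x e) => [z|] //; case: (z \in QH) => //; exact: IH.
Qed.

Section Augmented.
Variables (Q Sigma : finType) (dH : Q -> Sigma -> option Q) (N : nat).

Lemma run_aug_delta x w y :
  run dH x w = Some y -> run (aug_delta dH N) (Some x) w = Some (Some y).
Proof.
elim: w x => [x /= [->] //|e w IH x] /=.
by rewrite {1}/aug_delta; case: (dH x e) => // z; exact: IH.
Qed.

Lemma aug_run_rcons x w y e : run dH x w = Some y ->
  isSome (run (aug_delta dH N) (Some x) (rcons w e)) = aug_Gamma dH N y e.
Proof. by move=> xwy; rewrite run_rcons (run_aug_delta xwy). Qed.

Lemma aug_run_nil x e :
  isSome (run (aug_delta dH N) (Some x) [:: e]) = aug_Gamma dH N x e.
Proof. by rewrite /aug_Gamma /=; case: (dH x e) => // ; case: enabled_within. Qed.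

(* [None] (the state [q_dis]) has no outgoing transitions, so a run that goes on
   after [e] must follow [dH] on [e]. *)
Lemma aug_run_cons x e w f :
  isSome (run (aug_delta dH N) (Some x) (rcons (e :: w) f)) ->
  exists2 y, dH x e = Some y & isSome (run (aug_delta dH N) (Some y) (rcons w f)).
Proof.
rewrite /= {1}/aug_delta; case: (dH x e) => [y|]; first by exists y.
by case: enabled_within => //; case: w.
Qed.

End Augmented.

Section Verifier.
Variables (Q Sigma : finType) (dH : Q -> Sigma -> option Q) (q0 : Q) (n : nat)
  (So Sc : 'I_n -> {set Sigma}) (No : 'I_n -> nat) (sigma : Sigma) (k : nat).

Local Notation VR := (vreach dH q0 So Sc No sigma k).

(* Case C5 at level [d]; once reached, it persists at every later level. *)
Definition frozen i x d := (k - d <= No i) && aug_Gamma dH (No i) x sigma.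

Lemma frozen_mono i x d d' : d <= d' -> frozen i x d -> frozen i x d'.
Proof. by rewrite /frozen => le /andP[kd ->]; rewrite andbT; lia. Qed.

Lemma moves_obsE qs d i e : moves_obs dH So Sc No sigma k qs d i e =
  [&& sigma \in Sc i, e \in So i & ~~ frozen i (qs i) d].
Proof. by rewrite /moves_obs /frozen negb_and -ltnNge. Qed.

Lemma moves_unobsE qs d i e : moves_unobs dH So Sc No sigma k qs d i e =
  [&& sigma \in Sc i, e \notin So i & ~~ frozen i (qs i) d].
Proof. by rewrite /moves_unobs /frozen negb_and -ltnNge. Qed.

Definition observed i x u (s : seq Sigma) := exists j,
  [/\ j <= size s, proj (So i) u = proj (So i) (take j s) & j = size s \/ frozen i x j].

Lemma observed_in_Theta i x u s :
  size s = k -> observed i x u s -> in_Theta (So i) (No i) s (proj (So i) u).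
Proof.
move=> sz [j [js uj fj]]; exists (size s - j); rewrite subKn //; split => //.
by case: fj => [->|/andP[+ _]]; lia.
Qed.

Lemma observed_now i x u s : proj (So i) u = proj (So i) s -> observed i x u s.
Proof. by move=> us; exists (size s); rewrite take_size; split => //; left. Qed.

Lemma observed_live i x u s :
  observed i x u s -> ~~ frozen i x (size s) -> proj (So i) u = proj (So i) s.
Proof.
case=> j [js uj [jd | fz]]; first by rewrite uj jd take_size.
by rewrite (frozen_mono js fz).
Qed.

Lemma observed_stay i x u s e : observed i x u s ->
  (e \in So i -> frozen i x (size s)) -> observed i x u (rcons s e).
Proof.
case=> j [js uj fj] fe.
have take_j : take j (rcons s e) = take j s by rewrite -cats1 takel_cat.
have [eo|eo] := boolP (e \in So i); last case: fj => [jd|fz].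
- exists j; rewrite size_rcons take_j; split => //; first lia.
  by case: fj => [->|]; [right; exact: fe | right].
- by apply: observed_now; rewrite uj jd take_size /proj filter_rcons (negbTE eo).
- by exists j; rewrite size_rcons take_j; split => //; [lia | right].
Qed.

Lemma vreach_witness q qs d : VR q qs d -> exists s, [/\ size s = d, run dH q0 s = Some q &
  exists ss : 'I_n -> seq Sigma, forall i, sigma \in Sc i ->
    run dH q0 (ss i) = Some (qs i) /\ observed i (qs i) (ss i) s].
Proof.
elim=> {q qs d} [|q qs d e q' qs' _ [s [<- rq [ss Hss]]] _ qq' Hqs'
                 |q qs d e i r _ [s [<- rq [ss Hss]]] Hm ir].
- exists [::]; split => //; exists (fun _ => [::]) => i _.
  by split => //; apply: observed_now.
- exists (rcons s e); split; [exact: size_rcons | by rewrite run_rcons rq |].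
  exists (fun i => if moves_obs dH So Sc No sigma k qs (size s) i e then rcons (ss i) e else ss i).
  move=> i Sci; have [ri oi] := Hss i Sci; move: (Hqs' i); rewrite moves_obsE Sci /=.
  case: ifP => [/andP[_ nf] ry|stay ->].
    split; first by rewrite run_rcons ri.
    by apply: observed_now; rewrite /proj -!cats1 !filter_cat -!/(proj _ _) (observed_live oi).
  split => //; apply: observed_stay oi _ => eo.
  by move: stay; rewrite eo => /negbFE.
- exists s; split => //.
  exists (fun j => if j == i then rcons (ss i) e else ss j) => j Scj.
  case: eqP => [ji|_]; last exact: Hss.
  subst j; have [ri oi] := Hss i Scj; move: Hm; rewrite moves_unobsE => /and3P[_ eo nf].
  split; first by rewrite run_rcons ri.
  by apply: observed_now; rewrite /proj filter_rcons (negbTE eo) -/(proj _ _) (observed_live oi).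
Qed.

Definition starts_observable (A : {set Sigma}) (w : seq Sigma) :=
  if w is e :: _ then e \in A else true.

Section Completeness.
Variables (s : seq Sigma) (ss : 'I_n -> seq Sigma).
Hypothesis size_s : size s = k.
Hypothesis run_s : isSome (run dH q0 s).
Hypothesis ss_Theta : forall i, sigma \in Sc i ->
  in_Theta (So i) (No i) s (proj (So i) (ss i)).
Hypothesis ss_aug : forall i, sigma \in Sc i ->
  isSome (run (aug_delta dH (No i)) (Some q0) (rcons (ss i) sigma)).

(* From state [x] at level [d], component [i] still has to read [w] (then
   [sigma]), whose observation is what remains of [P_i(s_{-m})] after [d] events. *)
Definition pending i x d w m :=
  [/\ isSome (run (aug_delta dH (No i)) (Some x) (rcons w sigma)), m <= No i &
      proj (So i) w = proj (So i) (drop d (take (k - m) s))].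

Definition tracking i x d := exists w m, pending i x d w m.
Definition ready i x d := exists w m, pending i x d w m /\ starts_observable (So i) w.
Definition all_tracking qs d := forall i, sigma \in Sc i -> frozen i (qs i) d \/ tracking i (qs i) d.
Definition all_ready qs d := forall i, sigma \in Sc i -> frozen i (qs i) d \/ ready i (qs i) d.

Lemma ready_tracking i x d : ready i x d -> tracking i x d.
Proof. by case=> w [m [? _]]; exists w, m. Qed.

Lemma pending_exhausted i x d w m : pending i x d w m -> starts_observable (So i) w ->
  k - m <= d -> aug_Gamma dH (No i) x sigma.
Proof.
case=> augw _ pw obs md; rewrite drop_take_oversize // in pw.
by case: w obs pw augw => [_ _|e w /= eo]; [rewrite aug_run_nil | rewrite /proj /= eo].
Qed.

Lemma pending_unobservable_head i x d e w m : pending i x d (e :: w) m -> e \notin So i ->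
  exists2 y, dH x e = Some y & pending i y d w m.
Proof.
case=> /aug_run_cons[y xy augw] mN pw eo; exists y => //; split => //.
by rewrite -pw /proj /= (negbTE eo).
Qed.

Lemma pending_observable i x d w m : pending i x d w m -> starts_observable (So i) w ->
  d < k - m -> nth sigma s d \in So i ->
  exists2 y, dH x (nth sigma s d) = Some y & pending i y d.+1 (behead w) m.
Proof.
case=> augw mN pw obs dm eo.
rewrite (drop_take_nth sigma dm) ?size_s ?leq_subr // /proj /= eo in pw.
case: w obs pw augw => [|e w /= obs] //; rewrite /= obs => -[<- pw].
by case/aug_run_cons=> y xy augw; exists y.
Qed.

Lemma pending_unobservable i x d w m : pending i x d w m -> nth sigma s d \notin So i ->
  pending i x d.+1 w m.
Proof.
case=> augw mN pw eo; split => //; rewrite pw.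
have [dm|md] := ltnP d (k - m); last by rewrite !drop_take_oversize //; lia.
by rewrite (drop_take_nth sigma dm) ?size_s ?leq_subr // /proj /= (negbTE eo).
Qed.

Lemma make_ready_component i d q qs : VR q qs d ->
  (sigma \in Sc i -> frozen i (qs i) d \/ tracking i (qs i) d) ->
  exists qs', [/\ VR q qs' d, forall j, j != i -> qs' j = qs j &
    sigma \in Sc i -> frozen i (qs' i) d \/ ready i (qs' i) d].
Proof.
move=> Vqs fti; have [Sci|_] := boolP (sigma \in Sc i); last by exists qs.
case: {fti}(fti Sci) => [fz|[w [m]]]; first by exists qs; split => //; left.
elim: w qs Vqs => [|e w IH] qs Vqs pend; first by exists qs; split => // _; right; exists [::], m.
case fz: (frozen i (qs i) d); first by exists qs; split => // _; left.
case eo: (e \in So i); first by exists qs; split => // _; right; exists (e :: w), m; rewrite /= eo.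
have [y ey pend'] := pending_unobservable_head pend (negbT eo).
have Vy : VR q (fun j => if j == i then y else qs j) d.
  by apply: vr_type2 Vqs _ ey; rewrite moves_unobsE Sci eo fz.
have [|qs' [V' same Hi]] := IH _ Vy; first by rewrite /= eqxx.
by exists qs'; split => // j ji; rewrite same // (negbTE ji).
Qed.

Lemma make_ready_all d q qs : VR q qs d -> all_tracking qs d ->
  exists qs', VR q qs' d /\ all_ready qs' d.
Proof.
move=> Vqs tqs.
suff /(_ (enum 'I_n)) [qs' [V' Hr]] : forall r : seq 'I_n, exists qs', VR q qs' d /\
    forall i, sigma \in Sc i ->
      frozen i (qs' i) d \/ (if i \in r then ready i (qs' i) d else tracking i (qs' i) d).
  by exists qs'; split => // i /Hr; rewrite mem_enum.
elim=> [|i r [qs1 [V1 Hr1]]]; first by exists qs.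
have [|qs' [V' same Hi]] := make_ready_component V1 (i := i).
  by move=> /Hr1; case: (i \in r) => //; case=> [|/ready_tracking]; [left | right].
exists qs'; split => // j; rewrite in_cons.
have [-> /Hi|ji /Hr1] := eqVneq j i; first by [].
by rewrite same.
Qed.

Lemma ready_component_step i x d : d < k -> sigma \in Sc i ->
  frozen i x d \/ ready i x d ->
  if (nth sigma s d \in So i) && ~~ frozen i x d
  then exists2 y, dH x (nth sigma s d) = Some y & tracking i y d.+1
  else frozen i x d.+1 \/ tracking i x d.+1.
Proof.
move=> dk Sci fs; case fz: (frozen i x d).
  by rewrite andbF; left; exact: frozen_mono fz.
case: fs => [|[w [m [pend obs]]]]; first by rewrite fz.
rewrite andbT; case: ifP => eo; last by right; exists w, m; exact: pending_unobservable (negbT eo).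
have [dm|md] := ltnP d (k - m).
  by have [y xy pend'] := pending_observable pend obs dm eo; exists y => //; exists (behead w), m.
have: frozen i x d; last by rewrite fz.
by have [_ mN _] := pend; rewrite /frozen (pending_exhausted pend obs md) andbT; lia.
Qed.

Lemma ready_step d q qs q' : d < k -> VR q qs d -> all_ready qs d ->
  dH q (nth sigma s d) = Some q' -> exists qs', VR q' qs' d.+1 /\ all_tracking qs' d.+1.
Proof.
move=> dk Vqs sqs qq'; set e := nth sigma s d.
have step i Sci := ready_component_step dk Sci (sqs i Sci).
pose qs' i := if moves_obs dH So Sc No sigma k qs d i e then odflt (qs i) (dH (qs i) e) else qs i.
exists qs'; split => [|i Sci]; last first.
  by move: (step i Sci); rewrite /qs' moves_obsE Sci /=; case: ifP => // _ [y -> wy]; right.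
apply: vr_type1 Vqs dk qq' _ => i; rewrite /qs'.
case M: (moves_obs _ _ _ _ _ _ _ _ _ _) => //; move: M; rewrite moves_obsE.
by case/and3P=> Sci eo nf; move: (step i Sci); rewrite eo nf => -[y ->].
Qed.

Lemma reach_level d : d <= k -> exists q qs,
  [/\ run dH q0 (take d s) = Some q, VR q qs d & all_ready qs d].
Proof.
elim: d => [_|d IH dk].
  have [|qs [V S]] := make_ready_all (vr_init dH q0 So Sc No sigma k).
    move=> i Sci; right; have [m [mN sm]] := ss_Theta Sci.
    by exists (ss i), m; split => //; [exact: ss_aug | rewrite sm drop0 size_s].
  by exists q0, qs; rewrite take0.
have [q [qs [rq Vqs sqs]]] := IH (ltnW dk).
have run_take : take d.+1 s = rcons (take d s) (nth sigma s d) by rewrite (take_nth sigma) ?size_s.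
have : isSome (run dH q0 (take d.+1 s)).
  by apply: (run_prefix (b := drop d.+1 s)); rewrite cat_take_drop.
rewrite run_take run_rcons rq; case qq': (dH q _) => [q'|] // _.
have [qs' [V' L']] := ready_step dk Vqs sqs qq'.
have [qs'' [V'' S'']] := make_ready_all V' L'.
by exists q', qs''.
Qed.

Lemma completeness_witness : exists q qs, [/\ run dH q0 s = Some q, VR q qs k &
  forall i, sigma \in Sc i -> aug_Gamma dH (No i) (qs i) sigma].
Proof.
have [q [qs [rq Vqs sqs]]] := reach_level (leqnn k).
exists q, qs; rewrite -size_s take_size in rq; split => // i /sqs [/andP[] //|].
by case=> w [m [pend obs]]; apply: pending_exhausted pend obs _; rewrite leq_subr.
Qed.

End Completeness.
End Verifier.

Theorem proposition1 (Q Sigma : finType) (delta : Q -> Sigma -> option Q)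
  (q0 : Q) (QH : {set Q}) (n : nat) (So Sc : 'I_n -> {set Sigma})
  (No : 'I_n -> nat) (sigma : Sigma) :
  q0 \in QH ->
  (exists i, sigma \in Sc i) ->
  forall k : nat, k < \max_(i | sigma \in Sc i) No i ->
  let dH := sub_delta delta QH in
  (forall s : seq Sigma,
      isSome (run dH q0 s) -> size s = k ->
      isSome (run delta q0 (rcons s sigma)) ->
      ~~ isSome (run dH q0 (rcons s sigma)) ->
      forall ss : 'I_n -> seq Sigma,
        (forall i, sigma \in Sc i ->
           in_Theta (So i) (No i) s (proj (So i) (ss i))) ->
        exists i, sigma \in Sc i /\
          ~~ isSome (run (aug_delta dH (No i)) (Some q0) (rcons (ss i) sigma)))
  <->
  ~ (exists (q : Q) (qs : 'I_n -> Q),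
       vreach dH q0 So Sc No sigma k q qs k /\
       isSome (delta q sigma) /\ ~~ isSome (dH q sigma) /\
       (forall i, sigma \in Sc i -> aug_Gamma dH (No i) (qs i) sigma)).
Proof.
move=> _ _ k _ dH; split.
  move=> disables [q [qs [Vqs [Gq [nGHq Gaug]]]]].
  have [s [sz rq [ss obs]]] := vreach_witness Vqs.
  have [||||i [Sci]] := disables s _ sz _ _ ss.
  - by rewrite rq.
  - by rewrite run_rcons (run_sub_delta rq).
  - by rewrite run_rcons rq.
  - by move=> i Sci; have [_ /(observed_in_Theta sz)] := obs i Sci.
  by have [ri _] := obs i Sci; rewrite (aug_run_rcons _ _ ri) Gaug.
move=> no_bad_state s rs sz Gs nGHs ss Theta.
have [/existsP[i /andP[Sci]]|/existsPn all_aug] := boolP [exists i,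
    (sigma \in Sc i) && ~~ isSome (run (aug_delta dH (No i)) (Some q0) (rcons (ss i) sigma))].
  by exists i.
have aug i : sigma \in Sc i ->
    isSome (run (aug_delta dH (No i)) (Some q0) (rcons (ss i) sigma)).
  by move=> Sci; move: (all_aug i); rewrite Sci negbK.
have [q [qs [rq Vqs Gaug]]] := completeness_witness sz rs Theta aug.
case: no_bad_state; exists q, qs; split => //.
by rewrite !run_rcons rq (run_sub_delta rq) in Gs nGHs.
Qed.
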